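(* If $\eta$ is a probability measure (i.e. $\eta(\mathbb{X})=1$), then $\eta(A)=\tau(A)$ for every open set $A\subset\mathbb{X}$ with $\eta(\partial A)=0$.
   Context: $\mathbb{X}$ is a compact metric space. $(\xi_j)_{j\in\mathbb N}$ is a sequence of finitely additive outer probabilities on $\mathbb{X}$ (set functions on all subsets, values in $[0,1]$, finitely additive, $\xi_j(\mathbb{X})=1$). For $A\subset\mathbb{X}$, $\tau(A)=\limsup_{n\to\infty}\frac1n\sum_{j=0}^{n-1}\xi_j(A)$. For $Y\subset\mathbb{X}$, $r>0$, $\nu_r(Y)=\inf\sum_{I\in\mathcal I}\tau(I)$ over countable covers $\mathcal I$ of $Y$ by open sets of diameter $\le r$; $\nu(Y)=\sup_{r>0}\nu_r(Y)$; $\eta$ is the restriction of $\nu$ to Borel sets. *)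

From HB Require Import structures.
From mathcomp Require Import all_boot all_order all_algebra.
From mathcomp Require Import all_classical all_reals all_analysis.
Set Implicit Arguments. Unset Strict Implicit. Unset Printing Implicit Defensive.
Import Order.TTheory GRing.Theory Num.Theory.
Local Open Scope classical_set_scope.
Local Open Scope ring_scope.

Section Defs.
Context {R : realType} {X : metricType R}.

Definition fa_outer_prob (xi : nat -> set X -> R) : Prop :=
  [/\ (forall j (A : set X), 0 <= xi j A <= 1),
      (forall j (A B : set X), A `&` B = set0 -> xi j (A `|` B) = xi j A + xi j B)
    & (forall j, xi j setT = 1)].

Definition tau (xi : nat -> set X -> R) (A : set X) : \bar R :=
  limn_esup (fun n : nat => ((n%:R)^-1 * \sum_(j < n) xi j A)%:E).

Definition diam_le (I : set X) (r : R) : Prop :=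
  forall x y, I x -> I y -> mdist x y <= r.

(* nu_r(Y): infimum of sum tau(I) over countable covers of Y by open sets of
   diameter <= r (countable covers indexed by nat; finite ones padded with set0) *)
Definition nu_r (xi : nat -> set X -> R) (r : R) (Y : set X) : \bar R :=
  ereal_inf [set s : \bar R | exists I : nat -> set X,
    [/\ (forall n, open (I n)), (forall n, diam_le (I n) r),
        Y `<=` \bigcup_n I n
      & s = (\sum_(n <oo) tau xi (I n))%E]].

Definition nu (xi : nat -> set X -> R) (Y : set X) : \bar R :=
  ereal_sup [set nu_r xi r Y | r in [set r : R | 0 < r]].

Definition boundary (A : set X) : set X := closure A `\` interior A.

End Defs.

From HB Require Import structures.
From mathcomp Require Import all_boot all_order all_algebra.
From mathcomp Require Import all_classical all_reals all_analysis.
From mathcomp Require Import lra.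
Set Implicit Arguments. Unset Strict Implicit. Unset Printing Implicit Defensive.
Import Order.TTheory GRing.Theory Num.Theory.
Local Open Scope classical_set_scope.
Local Open Scope ring_scope.

(* tau is monotone and finitely subadditive with tau(B) + tau(~B) >= 1, so by
   compactness it is bounded on a compact set by the tau-mass of any open cover.
   tau(A) <= nu(A): a cover of A together with a cheap cover J of the boundary
   covers the compact set closure A.
   nu(A) <= tau(A): by compactness of ~A, the sets of a fine enough cover I of
   X which leave A meet A only inside the union of J; so they cover ~A, while
   the other sets of I together with J cover A.  As the tau-mass of I is close
   to nu(X) = 1 <= tau(A) + tau(~A), the sets inside A cost about tau(A). *)

Section limn_esup_bounds.
Context {R : realType}.
Implicit Types (u v : (\bar R)^nat) (c : \bar R).
Local Open Scope ereal_scope.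

Lemma limn_esup_le u c : (\forall n \near \oo, u n <= c) -> limn_esup u <= c.
Proof.
move=> uc; apply: le_trans (ereal_inf_lbound _) _; first by exists [set n | u n <= c].
by apply: ge_ereal_sup => _ [n + <-].
Qed.

Lemma limn_esup_ge u c : (\forall n \near \oo, c <= u n) -> c <= limn_esup u.
Proof.
move=> cu; apply: le_ereal_inf_tmp => _ [V oV <-].
have [n [Vn /le_trans -> //]] := filter_ex (filterI oV cu).
by apply: ereal_sup_ubound; exists n.
Qed.

Lemma le_limn_esup u v : (\forall n \near \oo, u n <= v n) ->
  limn_esup u <= limn_esup v.
Proof.
move=> uv; apply: le_ereal_inf_tmp => _ [V oV <-].
apply: le_trans (ereal_inf_lbound _) _.
  by exists (V `&` [set n | u n <= v n]); first exact: filterI.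
apply: ge_ereal_sup => _ [n [Vn /le_trans uvn] <-]; apply: uvn.
by apply: ereal_sup_ubound; exists n.
Qed.

Lemma limn_esup_lt u c : limn_esup u < c -> \forall n \near \oo, u n < c.
Proof.
move=> /ereal_inf_lt[_ [V oV <-]] Vc; apply: filterS oV => n Vn.
by apply: le_lt_trans Vc; apply: ereal_sup_ubound; exists n.
Qed.

Lemma limn_esupD_le u v : limn_esup u \is a fin_num -> limn_esup v \is a fin_num ->
  limn_esup (fun n => u n + v n) <= limn_esup u + limn_esup v.
Proof.
move=> uf vf; apply/lee_addgt0Pr => e e0; apply: limn_esup_le.
have e20 : (0 < e / 2)%R by rewrite divr_gt0.
have eu : \forall n \near \oo, u n < limn_esup u + (e / 2)%:E.
  by apply: limn_esup_lt; rewrite lteDl ?lte_fin.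
have ev : \forall n \near \oo, v n < limn_esup v + (e / 2)%:E.
  by apply: limn_esup_lt; rewrite lteDl ?lte_fin.
near=> n.
rewrite [e]splitr EFinD addeACA; apply: ltW.
by apply: lteD; [near: n; exact: eu|near: n; exact: ev].
Unshelve. all: by end_near. Qed.

End limn_esup_bounds.

Section finitely_additive.
Context {T : Type} {R : realDomainType} (mu : set T -> R).
Hypothesis mu_ge0 : forall A, 0 <= mu A.
Hypothesis muU : forall A B, A `&` B = set0 -> mu (A `|` B) = mu A + mu B.

Lemma fadd_set0 : mu set0 = 0.
Proof. by apply: (@addrI _ (mu set0)); rewrite addr0 -muU ?setU0 ?setI0. Qed.

Lemma fadd_setUD A B : mu (A `|` B) = mu A + mu (B `\` A).
Proof. by rewrite -muU ?setDIK // setUDr setDv setD0. Qed.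

Lemma le_fadd A B : A `<=` B -> mu A <= mu B.
Proof. by move=> AB; rewrite -(setUidr AB) fadd_setUD lerDl. Qed.

Lemma fadd_setU_le A B : mu (A `|` B) <= mu A + mu B.
Proof. by rewrite fadd_setUD lerD2l le_fadd // => x []. Qed.

End finitely_additive.

Definition interleave {T : Type} (u v : nat -> T) n := if odd n then v n./2 else u n./2.

Lemma interleave_comp {T U : Type} (f : T -> U) (u v : nat -> T) n :
  f (interleave u v n) = interleave (f \o u) (f \o v) n.
Proof. by rewrite /interleave; case: ifP. Qed.

Lemma interleave_forall {T : Type} (P : T -> Prop) (u v : nat -> T) :
  (forall n, P (u n)) -> (forall n, P (v n)) -> forall n, P (interleave u v n).
Proof. by move=> Pu Pv n; rewrite /interleave; case: ifP. Qed.

Lemma bigcup_interleave {T : Type} (I J : nat -> set T) :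
  \bigcup_n interleave I J n = (\bigcup_n I n) `|` (\bigcup_n J n).
Proof.
apply/seteqP; split=> x.
  by case=> n _; rewrite /interleave; case: ifP => _; [right|left]; exists n./2.
case=> -[n _ x_n]; first by exists n.*2 => //; rewrite /interleave odd_double doubleK.
by exists n.*2.+1 => //; rewrite /interleave /= odd_double /= uphalf_double.
Qed.

Lemma nneseries_interleave_le {R : realType} (f g : (\bar R)^nat) :
  (forall n, (0 <= f n)%E) -> (forall n, (0 <= g n)%E) ->
  (\sum_(n <oo) interleave f g n <= \sum_(n <oo) f n + \sum_(n <oo) g n)%E.
Proof.
move=> f0 g0; have fg0 n : (0 <= interleave f g n)%E by rewrite /interleave; case: ifP.
have sum_double n : (\sum_(0 <= i < n.*2) interleave f g i =
    \sum_(0 <= i < n) f i + \sum_(0 <= i < n) g i)%E.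
  elim: n => [|n IH]; first by rewrite !big_geq // adde0.
  rewrite doubleS !big_nat_recr //= IH /interleave /= odd_double /= doubleK.
  by rewrite uphalf_double -addeA addeACA.
apply: lime_le; first exact: is_cvg_nneseries.
apply: nearW => n; apply: (@le_trans _ _ (\sum_(0 <= i < n.*2) interleave f g i)%E).
  by apply: ereal_nondecreasing_series => //; rewrite -addnn leq_addr.
by rewrite sum_double; apply: leeD; exact: nneseries_lim_ge.
Qed.

Section small_sets.
Context {R : realType} {X : metricType R}.

Lemma compact_closed_gap (F C : set X) :
  compact F -> closed C -> F `&` C = set0 ->
  exists2 d : R, 0 < d & forall y z, F y -> C z -> d <= mdist y z.
Proof.
move=> cF cC FC0.
pose P N y := forall z, C z -> N.+1%:R^-1 <= mdist y z.
suff [N _ /(_ N (leqnn N)) FP] : \forall N \near \oo, F `<=` P N.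
  by exists N.+1%:R^-1 => [|y z /FP]; [rewrite invr_gt0 ltr0Sn|apply].
apply: ((compact_near_coveringP F).1 cF nat \oo P) => y Fy.
have /nbhs_ballP[e /= e0 yeC] : nbhs y (~` C).
  apply: open_nbhs_nbhs; split; first exact: closed_openC.
  by move=> Cy; have : (F `&` C) y by []; rewrite FC0.
have e20 : 0 < e / 2 by rewrite divr_gt0.
have [N0 _ N0e] := near_infty_natSinv_lt (PosNum e20).
exists (ball y (e / 2), [set N | (N0 <= N)%N]).
  by split; [exact: nbhsx_ballx|exists N0].
case=> x N [/= + /N0e /= Ne] z Cz; rewrite ballEmdist /= => yx.
have yz : e <= mdist y z.
  by rewrite leNgt; apply/negP => yz; apply: (yeC z) => //; rewrite ballEmdist.
have := metric_triangle y x z; move: Ne; set a := N.+1%:R^-1; lra.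
Qed.

Lemma boundary_nbhs_small_diam (A U : set X) : compact [set: X] -> open A ->
  open U -> boundary A `<=` U ->
  exists2 d : R, 0 < d & forall B, diam_le B d -> ~ B `<=` A -> B `&` A `<=` U.
Proof.
move=> cX oA oU AU.
have cAC : compact (~` A) := subclosed_compact (open_closedC oA) cX (@subsetT _ _).
have clAU : closed (closure A `\` U).
  by rewrite setDE; apply: closedI; [exact: closed_closure|exact: open_closedC].
have [|d d0 gap] := compact_closed_gap cAC clAU.
  apply/seteqP; split => // y [Ay [clAy /(_ (AU _ _))]]; apply.
  by split => // /interior_subset.
exists (d / 2) => [|B Bd BA x [Bx Ax]]; first by rewrite divr_gt0.
apply: contrapT => Ux; apply: BA => y By; apply: contrapT => Ay.
have := gap y x Ay (conj (subset_closure Ax) Ux); have := Bd y x By Bx; lra.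
Qed.

Lemma diam_le_set0 (r : R) : diam_le (@set0 X) r.
Proof. by move=> x y []. Qed.

Lemma le_diam (B : set X) (r s : R) : r <= s -> diam_le B r -> diam_le B s.
Proof. by move=> rs Br x y Bx By; exact: le_trans (Br x y Bx By) rs. Qed.

End small_sets.

Section tau_outer.
Context {R : realType} {X : metricType R} (xi : nat -> set X -> R).
Hypothesis hxi : fa_outer_prob xi.

Let xi_ge0 j A : 0 <= xi j A. Proof. by case: hxi => /(_ j A)/andP[]. Qed.
Let xi_le1 j A : xi j A <= 1. Proof. by case: hxi => /(_ j A)/andP[]. Qed.
Let xiU j A B : A `&` B = set0 -> xi j (A `|` B) = xi j A + xi j B.
Proof. by case: hxi => _ + _; apply. Qed.
Let xiT j : xi j setT = 1. Proof. by case: hxi. Qed.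

Definition xi_mean (A : set X) n := n%:R^-1 * \sum_(j < n) xi j A.

Lemma xi_mean_ge0 A n : 0 <= xi_mean A n.
Proof. by rewrite mulr_ge0 ?invr_ge0 ?sumr_ge0. Qed.

Lemma xi_mean_le1 A n : xi_mean A n <= 1.
Proof.
case: n => [|n]; first by rewrite /xi_mean big_ord0 mulr0.
rewrite /xi_mean ler_pdivrMl ?ltr0Sn // mulr1.
rewrite -[n.+1 in leRHS]card_ord -sumr_const.
by apply: ler_sum => j _; exact: xi_le1.
Qed.

Lemma le_xi_mean A B n : A `<=` B -> xi_mean A n <= xi_mean B n.
Proof.
move=> AB; rewrite ler_wpM2l ?invr_ge0 //.
by apply: ler_sum => j _; exact: le_fadd (xi_ge0 j) (xiU j) _ _ AB.
Qed.

Lemma xi_mean_setU_le A B n : xi_mean (A `|` B) n <= xi_mean A n + xi_mean B n.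
Proof.
rewrite -mulrDr ler_wpM2l ?invr_ge0 // -big_split /=.
by apply: ler_sum => j _; exact: fadd_setU_le (xi_ge0 j) (xiU j) A B.
Qed.

Lemma xi_meanC A n : (0 < n)%N -> xi_mean A n + xi_mean (~` A) n = 1.
Proof.
move=> n0; rewrite -mulrDr -big_split /=.
under eq_bigr do rewrite -xiU ?setUv ?xiT ?setICr //.
by rewrite sumr_const card_ord mulVf // pnatr_eq0 -lt0n.
Qed.

Local Open Scope ereal_scope.

Lemma tau_ge0 A : 0 <= tau xi A.
Proof. by apply: limn_esup_ge; apply: nearW => n; rewrite lee_fin xi_mean_ge0. Qed.

Lemma tau_le1 A : tau xi A <= 1.
Proof. by apply: limn_esup_le; apply: nearW => n; rewrite lee_fin xi_mean_le1. Qed.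

Lemma tau_fin_num A : tau xi A \is a fin_num.
Proof. by rewrite ge0_fin_numE ?tau_ge0 // (le_lt_trans (tau_le1 A)) ?ltry. Qed.

Lemma tau_set0 : tau xi set0 = 0.
Proof.
apply/eqP; rewrite eq_le tau_ge0 andbT; apply: limn_esup_le; apply: nearW => n.
by rewrite /xi_mean big1 ?mulr0 // => j _; exact: fadd_set0 (xiU j).
Qed.

Lemma le_tau A B : A `<=` B -> tau xi A <= tau xi B.
Proof.
by move=> AB; apply: le_limn_esup; apply: nearW => n; rewrite lee_fin le_xi_mean.
Qed.

Lemma tau_setU_le A B : tau xi (A `|` B) <= tau xi A + tau xi B.
Proof.
apply: le_trans (limn_esupD_le (tau_fin_num A) (tau_fin_num B)).
by apply: le_limn_esup; apply: nearW => n; rewrite -EFinD lee_fin xi_mean_setU_le.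
Qed.

Lemma tau_setC_ge A : 1 <= tau xi A + tau xi (~` A).
Proof.
apply: le_trans (limn_esupD_le (tau_fin_num A) (tau_fin_num _)).
apply: limn_esup_ge; near=> n; rewrite -EFinD xi_meanC //.
by near: n; exists 1%N.
Unshelve. all: by end_near. Qed.

Lemma tau_bigsetU_le (I : nat -> set X) n :
  tau xi (\big[setU/set0]_(i < n) I i) <= \sum_(i < n) tau xi (I i).
Proof.
elim/big_ind2 : _ => [|s A t B sA tB|//]; first by rewrite tau_set0.
exact: le_trans (tau_setU_le A B) (leeD sA tB).
Qed.

Lemma tau_compact (K : set X) (I : nat -> set X) : compact K ->
  (forall n, open (I n)) -> K `<=` \bigcup_n I n ->
  tau xi K <= \sum_(n <oo) tau xi (I n).
Proof.
move=> cK oI KI.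
have [N _ /(_ N (leqnn N)) KIN] : \forall N \near \oo,
    K `<=` \big[setU/set0]_(i < N) I i.
  apply: ((compact_near_coveringP K).1 cK nat \oo) => x /KI[i _ Iix].
  exists (I i, [set N | (i < N)%N]) => /=.
    by split; [exact: open_nbhs_nbhs|exists i.+1].
  by case=> y N [/= Iiy iN]; rewrite -bigcup_mkord; exists i.
apply: le_trans (le_tau KIN) _; apply: le_trans (tau_bigsetU_le I N) _.
rewrite -(big_mkord xpredT (fun i => tau xi (I i))).
by apply: nneseries_lim_ge => n _ _; exact: tau_ge0.
Qed.

End tau_outer.

Section nu_outer.
Context {R : realType} {X : metricType R} (xi : nat -> set X -> R).
Hypothesis hxi : fa_outer_prob xi.
Local Open Scope ereal_scope.

Lemma nu_r_le (r : R) (Y : set X) (I : nat -> set X) :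
  (forall n, open (I n)) -> (forall n, diam_le (I n) r) ->
  Y `<=` \bigcup_n I n -> nu_r xi r Y <= \sum_(n <oo) tau xi (I n).
Proof. by move=> oI dI YI; apply: ereal_inf_lbound; exists I. Qed.

Lemma nu_r_ge (r : R) (Y : set X) (c : \bar R) :
  (forall I : nat -> set X, (forall n, open (I n)) -> (forall n, diam_le (I n) r) ->
     Y `<=` \bigcup_n I n -> c <= \sum_(n <oo) tau xi (I n)) ->
  c <= nu_r xi r Y.
Proof. by move=> cI; apply: le_ereal_inf_tmp => _ [I [oI dI YI ->]]; exact: cI. Qed.

Lemma nu_r_lt (r : R) (Y : set X) (c : \bar R) : nu_r xi r Y < c ->
  exists I : nat -> set X, [/\ forall n, open (I n), forall n, diam_le (I n) r,
    Y `<=` \bigcup_n I n & \sum_(n <oo) tau xi (I n) < c].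
Proof. by move=> /ereal_inf_lt[_ [I [oI dI YI ->]] Ic]; exists I. Qed.

Lemma nu_r_le_nu (r : R) (Y : set X) : (0 < r)%R -> nu_r xi r Y <= nu xi Y.
Proof. by move=> r0; apply: ereal_sup_ubound; exists r. Qed.

Lemma nu_null_small_cover (Y : set X) (r e : R) :
  nu xi Y = 0 -> (0 < r)%R -> (0 < e)%R ->
  exists J : nat -> set X, [/\ forall n, open (J n), forall n, diam_le (J n) r,
    Y `<=` \bigcup_n J n & \sum_(n <oo) tau xi (J n) < e%:E].
Proof.
move=> nuY0 r0 e0; apply: nu_r_lt.
by apply: le_lt_trans (nu_r_le_nu Y r0) _; rewrite nuY0 lte_fin.
Qed.

Lemma tau_series_ge0 (I : nat -> set X) : 0 <= \sum_(n <oo) tau xi (I n).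
Proof. by apply: nneseries_ge0 => n _ _; exact: tau_ge0 hxi _. Qed.

Lemma tau_interleave_le (I J : nat -> set X) :
  \sum_(n <oo) tau xi (interleave I J n) <=
  \sum_(n <oo) tau xi (I n) + \sum_(n <oo) tau xi (J n).
Proof.
under eq_eseriesr do rewrite interleave_comp.
by apply: nneseries_interleave_le => n; exact: tau_ge0 hxi _.
Qed.

Lemma nu_r_add_tauC_le (r : R) (A : set X) (I J : nat -> set X) :
  compact (~` A) ->
  (forall n, open (I n)) -> (forall n, diam_le (I n) r) ->
  (forall n, open (J n)) -> (forall n, diam_le (J n) r) ->
  [set: X] `<=` \bigcup_n I n ->
  (forall n, ~ I n `<=` A -> I n `&` A `<=` \bigcup_k J k) ->
  nu_r xi r A + tau xi (~` A) <=
  \sum_(n <oo) tau xi (I n) + \sum_(n <oo) tau xi (J n).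
Proof.
move=> cAC oI dI oJ dJ IT IJ.
pose I1 n := if `[< I n `<=` A >] then I n else set0.
pose I2 n := if `[< I n `<=` A >] then set0 else I n.
have sumI : \sum_(n <oo) tau xi (I n) =
    \sum_(n <oo) tau xi (I1 n) + \sum_(n <oo) tau xi (I2 n).
  rewrite -nneseriesD => [|n _ _|n _ _]; try exact: tau_ge0 hxi _.
  apply: eq_eseriesr => n _; rewrite /I1 /I2.
  by case: ifP => _; rewrite (tau_set0 hxi) ?adde0 ?add0e.
have A_cover : A `<=` \bigcup_n interleave I1 J n.
  rewrite bigcup_interleave => x Ax; have [n _ Inx] := IT x Logic.I.
  case: (asboolP (I n `<=` A)) => [InA|nInA].
    by left; exists n => //; rewrite /I1 asboolT.
  by right; exact: IJ nInA x (conj Inx Ax).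
have AC_cover : ~` A `<=` \bigcup_n I2 n.
  move=> x nAx; have [n _ Inx] := IT x Logic.I; exists n => //.
  by rewrite /I2 asboolF // => /(_ x Inx).
have oI1 n : open (I1 n) by rewrite /I1; case: ifP => _; [exact: oI|exact: open0].
have oI2 n : open (I2 n) by rewrite /I2; case: ifP => _; [exact: open0|exact: oI].
have dI1 n : diam_le (I1 n) r.
  by rewrite /I1; case: ifP => _; [exact: dI|exact: diam_le_set0].
rewrite sumI addeAC; apply: leeD; last exact: (tau_compact hxi cAC oI2 AC_cover).
apply: le_trans (tau_interleave_le I1 J); apply: nu_r_le A_cover.
- exact: (interleave_forall (P := open)).
- exact: (interleave_forall (P := diam_le^~ r)).
Qed.

End nu_outer.

Section nu_tau.
Context {R : realType} {X : metricType R} (xi : nat -> set X -> R).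
Hypothesis hxi : fa_outer_prob xi.
Hypothesis compactX : compact [set: X].
Local Open Scope ereal_scope.

Lemma tau_le_nu (A : set X) : nu xi (boundary A) = 0 -> tau xi A <= nu xi A.
Proof.
move=> nu_bd0; apply/lee_addgt0Pr => e e0.
have [J [oJ dJ bdJ sumJ]] := nu_null_small_cover nu_bd0 ltr01 e0.
have sumJ_fin : \sum_(n <oo) tau xi (J n) \is a fin_num.
  by rewrite ge0_fin_numE ?(tau_series_ge0 hxi) ?(lt_trans sumJ) ?ltry.
apply: le_trans (leeD (nu_r_le_nu xi A ltr01) (ltW sumJ)).
rewrite -leeBlDr //; apply: nu_r_ge => I oI _ AI; rewrite leeBlDr //.
apply: le_trans (le_tau hxi (@subset_closure _ A)) _.
apply: le_trans (tau_interleave_le hxi I J).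
have cclA := subclosed_compact (@closed_closure _ A) compactX (@subsetT _ _).
apply: (tau_compact hxi cclA); first exact: (interleave_forall (P := open)).
rewrite bigcup_interleave => x clAx; have [Ax|nAx] := pselect (A x).
  by left; exact: AI.
by right; apply: bdJ; split => // /interior_subset.
Qed.

Lemma nu_le_tau_open (A : set X) : nu xi [set: X] <= 1 -> open A ->
  nu xi (boundary A) = 0 -> nu xi A <= tau xi A.
Proof.
move=> nuX1 oA nu_bd0; apply: ge_ereal_sup => _ [r /= r0 <-].
apply/lee_addgt0Pr => e e0; have e20 : (0 < e / 2)%R by rewrite divr_gt0.
have [J [oJ dJ bdJ sumJ]] := nu_null_small_cover nu_bd0 r0 e20.
have oJU : open (\bigcup_n J n) by apply: bigcup_open => n _; exact: oJ.
have [d d0 Jd] := boundary_nbhs_small_diam compactX oA oJU bdJ.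
pose rho := Num.min r d.
have rho0 : (0 < rho)%R by rewrite lt_min r0 d0.
have rho_r : (rho <= r)%R by rewrite ge_min lexx.
have rho_d : (rho <= d)%R by rewrite ge_min lexx orbT.
have /nu_r_lt[I [oI dI IT sumI]] : nu_r xi rho [set: X] < (1 + e / 2)%:E.
  apply: le_lt_trans (nu_r_le_nu xi _ rho0) _.
  by rewrite (le_lt_trans nuX1) // lte_fin ltrDl.
have cAC := subclosed_compact (open_closedC oA) compactX (@subsetT _ (~` A)).
have := nu_r_add_tauC_le hxi cAC oI (fun n => le_diam rho_r (dI n)) oJ dJ IT
  (fun n => Jd (I n) (le_diam rho_d (dI n))).
move=> /le_trans/(_ (ltW (lteD sumI sumJ))); rewrite -EFinD -addrA -splitr EFinD.
move=> /le_trans/(_ (leeD (tau_setC_ge hxi A) (lexx e%:E))).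
by rewrite addeAC leeD2rE ?(tau_fin_num hxi).
Qed.

End nu_tau.

Theorem mainTheorem14 (R : realType) (X : metricType R)
  (hX : compact [set: X]) (xi : nat -> set X -> R) (hxi : fa_outer_prob xi)
  (hprob : nu xi [set: X] = 1%E) (A : set X) (hA : open A)
  (hbd : nu xi (boundary A) = 0%E) :
  nu xi A = tau xi A.
Proof. by apply/le_anti; rewrite nu_le_tau_open ?hprob ?tau_le_nu. Qed.
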